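(* In the setting where, in the inertial frame of the City (speed of light $c$), a Caravan leaves the City at time $0$ with constant velocity $V_c$, and a Messenger, after riding with the Caravan until the Caravan's proper time equals $T_1>0$, shuttles between Caravan and City at constant speed $V_m$ with instantaneous turnarounds, where $0<V_c<V_m<c$ and $q=\frac{V_c}{V_m-V_c}$: the Messenger's proper time $T_{n,\mathrm{Mes}}$ at his $n$-th departure from the Caravan ($n\ge1$) is $$T_{n,\mathrm{Mes}}=\rho\,T_1(1+2q)^{n-1}+(1-\rho)\,T_1,\qquad \rho=\frac{\sqrt{1-V_m^2/c^2}}{\sqrt{1-V_c^2/c^2}}.$$
   Context: Proper time of an observer moving with velocity $\vec v(\tau)$ in an inertial frame is $\int_0^t\sqrt{1-|\vec v(\tau)|^2/c^2}\,d\tau$. All clocks (City, Caravan, Messenger) are synchronized at the origin at time $0$. Before leaving the Caravan the Messenger moves with it at velocity $V_c$. *)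

From Stdlib Require Import Reals Lra.
Open Scope R_scope.

Definition q_ratio (Vc Vm : R) : R := Vc / (Vm - Vc).

Definition rho (c Vc Vm : R) : R :=
  sqrt (1 - Vm ^ 2 / c ^ 2) / sqrt (1 - Vc ^ 2 / c ^ 2).

Definition dtau (c : R) (v : R -> R) : R -> R :=
  fun t => sqrt (1 - (v t) ^ 2 / c ^ 2).

From Stdlib Require Import Reals Lra Lia.
Open Scope R_scope.

(* Write s(V) = sqrt (1 - V^2/c^2) for the clock rate of an
   observer moving at speed V.  Every leg of the Messenger's shuttle is a
   "round trip" Caravan -> City -> Caravan whose City-frame duration is
   proportional to its start time: solving the two leg equations gives
   d (n+1) = (1 + 2q) d n, hence d n = d 1 (1 + 2q)^(n-1) with
   d 1 = T1 / s(Vc).  The integrand s(|v|) is piecewise constant: s(Vc) on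
   [0, d 1) and s(Vm) afterwards, so the proper time at d n is
   T1 + s(Vm) (d n - d 1), which rearranges into the stated formula.
   The file first treats Riemann integrals of functions that are constant on
   an open interval (integrability, value, extension of an integral by such a
   piece), then the kinematics of one round trip, then, in a section sharing
   the hypotheses of the theorem, the departure times and the proper time. *)

(* A function that is constant on (a, b) is Riemann integrable on [a, b]:
   it is itself a step function there. *)
Lemma const_open_integrable (f : R -> R) (a b k : R) :
  a <= b -> (forall x, a < x < b -> f x = k) -> Riemann_integrable f a b.
Proof.
  intros Hab Hf.
  assert (Hstep : IsStepFun f a b).
  { exists (cons a (cons b nil)), (cons k nil).
    destruct (StepFun_P3 k Hab) as [H1 [H2 [H3 [H4 H5]]]].
    repeat split; try assumption.
    intros i Hi x Hx. simpl in Hi. assert (i = 0%nat) by lia. subst i.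
    simpl in Hx. unfold open_interval in Hx. simpl. apply Hf. lra. }
  intro eps. exists (mkStepFun Hstep), (mkStepFun (StepFun_P4 a b 0)).
  split.
  - intros t _. simpl. unfold fct_cte. rewrite Rminus_diag, Rabs_R0. lra.
  - rewrite StepFun_P18, Rmult_0_l, Rabs_R0. apply cond_pos.
Qed.

Lemma const_open_int (f : R -> R) (a b k : R) (pr : Riemann_integrable f a b) :
  a <= b -> (forall x, a < x < b -> f x = k) -> RiemannInt pr = k * (b - a).
Proof.
  intros Hab Hf.
  rewrite (RiemannInt_P18 pr (RiemannInt_P14 a b k) Hab).
  - apply RiemannInt_P15.
  - intros; unfold fct_cte; auto.
Qed.

Lemma integral_extend_const (f : R -> R) (a b e k I : R) :
  b <= e -> (forall x, b < x < e -> f x = k) ->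
  (exists pr : Riemann_integrable f a b, RiemannInt pr = I) ->
  exists pr : Riemann_integrable f a e, RiemannInt pr = I + k * (e - b).
Proof.
  intros Hbe Hf [pr Hpr].
  pose (pr2 := const_open_integrable f b e k Hbe Hf).
  exists (RiemannInt_P24 pr pr2).
  rewrite <- (RiemannInt_P26 pr pr2), Hpr, (const_open_int f b e k pr2 Hbe Hf).
  reflexivity.
Qed.

Lemma clock_rate_pos (c V : R) : V ^ 2 < c ^ 2 -> 0 < sqrt (1 - V ^ 2 / c ^ 2).
Proof.
  intro HV. apply sqrt_lt_R0.
  assert (Hc2 : 0 < c ^ 2) by nra.
  assert (V ^ 2 / c ^ 2 < 1).
  { apply (Rmult_lt_reg_r (c ^ 2)); [exact Hc2|].
    unfold Rdiv. rewrite Rmult_assoc, Rinv_l by lra. lra. }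
  lra.
Qed.

(* One round trip: leaving the Caravan (position Vc t) at time t > 0, the
   Messenger reaches the City at s and catches up with the Caravan at t';
   then t <= s <= t' and t' = (1 + 2q) t. *)
Lemma round_trip (Vc Vm t s t' : R) :
  0 < Vc -> Vc < Vm -> 0 < t ->
  Vm * (s - t) = Vc * t -> Vm * (t' - s) = Vc * t' ->
  t <= s <= t' /\ t' = t * (1 + 2 * q_ratio Vc Vm).
Proof.
  intros hVc hVcm ht Hs Ht'.
  assert (Hratio : t' * (Vm - Vc) = t * (Vm + Vc)) by lra.
  assert (Ht'eq : t' = t * (1 + 2 * q_ratio Vc Vm)).
  { unfold q_ratio. apply (Rmult_eq_reg_r (Vm - Vc)); [| lra].
    rewrite Hratio. field. lra. }
  assert (Hs_t : t <= s) by nra.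
  assert (Ht'pos : 0 < t') by nra.
  split; [split; [exact Hs_t | nra] | exact Ht'eq].
Qed.

Section Shuttle.

Variables (c Vc Vm T1 : R) (d a : nat -> R) (v : R -> R).
Hypotheses (hVc : 0 < Vc) (hVcm : Vc < Vm) (hVm : Vm < c) (hT1 : 0 < T1).
Hypothesis hd1 : d 1%nat * sqrt (1 - Vc ^ 2 / c ^ 2) = T1.
Hypothesis ha : forall n : nat, (1 <= n)%nat -> Vm * (a n - d n) = Vc * d n.
Hypothesis hd : forall n : nat, (1 <= n)%nat -> Vm * (d (S n) - a n) = Vc * d (S n).
Hypothesis hv0 : forall t, 0 <= t < d 1%nat -> v t = Vc.
Hypothesis hv1 : forall (n : nat) t, (1 <= n)%nat -> d n <= t < a n -> v t = - Vm.
Hypothesis hv2 : forall (n : nat) t, (1 <= n)%nat -> a n <= t < d (S n) -> v t = Vm.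

Lemma first_departure_pos : 0 < d 1%nat.
Proof.
  assert (Hrate : 0 < sqrt (1 - Vc ^ 2 / c ^ 2)) by (apply clock_rate_pos; nra).
  destruct (Rlt_or_le 0 (d 1%nat)) as [Hpos | Hneg]; [exact Hpos|].
  assert (d 1%nat * sqrt (1 - Vc ^ 2 / c ^ 2) <= 0) by nra. lra.
Qed.

Lemma departure_closed_form (m : nat) :
  0 < d (S m) /\ d (S m) = d 1%nat * (1 + 2 * q_ratio Vc Vm) ^ m.
Proof.
  induction m as [|m [Hpos Heq]].
  - split; [exact first_departure_pos | simpl; ring].
  - destruct (round_trip Vc Vm (d (S m)) (a (S m)) (d (S (S m))) hVc hVcm Hpos
                (ha (S m) ltac:(lia)) (hd (S m) ltac:(lia))) as [Hle Hnext].
    split; [lra |].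
    rewrite Hnext, Heq. simpl. ring.
Qed.

Lemma arrival_between_departures (m : nat) :
  d (S m) <= a (S m) <= d (S (S m)).
Proof.
  destruct (departure_closed_form m) as [Hpos _].
  exact (proj1 (round_trip Vc Vm (d (S m)) (a (S m)) (d (S (S m))) hVc hVcm Hpos
                  (ha (S m) ltac:(lia)) (hd (S m) ltac:(lia)))).
Qed.

Lemma clock_rate_on_trip (m : nat) (x : R) :
  d (S m) < x < d (S (S m)) -> dtau c v x = sqrt (1 - Vm ^ 2 / c ^ 2).
Proof.
  intro Hx. pose proof (arrival_between_departures m) as Hle.
  unfold dtau. destruct (Rlt_or_le x (a (S m))).
  - rewrite (hv1 (S m) x) by (lia || lra).
    replace ((- Vm) ^ 2) with (Vm ^ 2) by ring. reflexivity.
  - rewrite (hv2 (S m) x) by (lia || lra). reflexivity.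
Qed.

(* Proper time at the (m+1)-th departure: T1 accumulated with the Caravan,
   then s(Vm) per unit of City time. *)
Lemma proper_time_at_departure (m : nat) :
  exists pr : Riemann_integrable (dtau c v) 0 (d (S m)),
    RiemannInt pr = T1 + sqrt (1 - Vm ^ 2 / c ^ 2) * (d (S m) - d 1%nat).
Proof.
  induction m as [|m IH].
  - assert (Hd1 := first_departure_pos).
    assert (Hf : forall x, 0 < x < d 1%nat ->
                 dtau c v x = sqrt (1 - Vc ^ 2 / c ^ 2)).
    { intros x Hx. unfold dtau. rewrite hv0 by lra. reflexivity. }
    exists (const_open_integrable _ _ _ _ (Rlt_le _ _ Hd1) Hf).
    rewrite (const_open_int _ _ _ _ _ (Rlt_le _ _ Hd1) Hf), <- hd1. ring.
  - assert (Hle : d (S m) <= d (S (S m))).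
    { pose proof (arrival_between_departures m). lra. }
    destruct (integral_extend_const _ _ _ _ _ _ Hle (clock_rate_on_trip m) IH)
      as [pr Hpr].
    exists pr. rewrite Hpr. ring.
Qed.

End Shuttle.

Theorem mainTheorem3 (c Vc Vm T1 : R) (d a : nat -> R) (v : R -> R)
  (hVc : 0 < Vc) (hVcm : Vc < Vm) (hVm : Vm < c) (hT1 : 0 < T1)
  (hd1 : d 1%nat * sqrt (1 - Vc ^ 2 / c ^ 2) = T1)
  (ha : forall n : nat, (1 <= n)%nat -> Vm * (a n - d n) = Vc * d n)
  (hd : forall n : nat, (1 <= n)%nat -> Vm * (d (S n) - a n) = Vc * d (S n))
  (hv0 : forall t, 0 <= t < d 1%nat -> v t = Vc)
  (hv1 : forall (n : nat) t, (1 <= n)%nat -> d n <= t < a n -> v t = - Vm)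
  (hv2 : forall (n : nat) t, (1 <= n)%nat -> a n <= t < d (S n) -> v t = Vm)
  (n : nat) (hn : (1 <= n)%nat) :
  exists pr : Riemann_integrable (dtau c v) 0 (d n),
    RiemannInt pr =
      rho c Vc Vm * T1 * (1 + 2 * q_ratio Vc Vm) ^ (n - 1)
      + (1 - rho c Vc Vm) * T1.
Proof.
  destruct n as [|m]; [lia|].
  replace (S m - 1)%nat with m by lia.
  destruct (proper_time_at_departure c Vc Vm T1 d a v hVc hVcm hVm hT1 hd1 ha hd
              hv0 hv1 hv2 m) as [pr Hpr].
  destruct (departure_closed_form c Vc Vm T1 d a hVc hVcm hVm hT1 hd1 ha hd m)
    as [_ Hdm].
  exists pr. rewrite Hpr, Hdm.
  (* d 1 = T1 / s(Vc) and rho = s(Vm) / s(Vc) *)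
  assert (Hrate : 0 < sqrt (1 - Vc ^ 2 / c ^ 2)) by (apply clock_rate_pos; nra).
  unfold rho. rewrite <- hd1. field. lra.
Qed.
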